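(* Let $(m,n)$ be coprime positive integers, $\gamma\in D_{m,n}$, and $(r_h,r_v)\in O(\gamma)$, where $r_h$ is the horizontal step ending at $(a,b)$ and $r_v$ is the vertical step starting at $(a',b')$. Then: (1) $l(a-1,b)$ intersects $r_v$ if and only if $-n< n(a'-a)-m(b'-b)< m-n$; (2) $l(a',b'+1)$ intersects $r_h$ if and only if $m-n< n(a'-a)-m(b'-b)< m$. In particular the conditions in (1) and (2) cannot hold simultaneously. Moreover, $(r_h,r_v)\in H(\gamma)$ if and only if $l(a-1,b)$ intersects $r_v$ or $l(a',b'+1)$ intersects $r_h$.
   Context: An $(m,n)$-Dyck path is a lattice path from $(0,0)$ to $(m,n)$ of $m$ horizontal unit steps $(1,0)$ and $n$ vertical unit steps $(0,1)$ lying weakly above $y=(n/m)x$; $D_{m,n}$ is the set of them. For a point $p$, $l(p)$ denotes the line through $p$ parallel to $y=(n/m)x$ (a ''parallel line''). Steps are regarded as closed unit segments. $O(\gamma)$ is the set of pairs $(r_h,r_v)$ with $r_h$ a horizontal step and $r_v$ a vertical step of $\gamma$, $r_v$ appearing after $r_h$ along $\gamma$; $H(\gamma)$ is the set of pairs in $O(\gamma)$ for which some parallel line intersects both $r_h$ and $r_v$. *)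

From HB Require Import structures.
From mathcomp Require Import all_boot all_order all_algebra.
Set Implicit Arguments. Unset Strict Implicit. Unset Printing Implicit Defensive.
Import Order.TTheory GRing.Theory Num.Theory.
Local Open Scope ring_scope.

(* A lattice path is a word g : seq bool; true = horizontal step (1,0),
   false = vertical step (0,1).  Step k (k < size g) goes from [pt g k]
   to [pt g k.+1].  Points of the plane are in rat * rat. *)

Definition pt (g : seq bool) (k : nat) : rat * rat :=
  ((count id (take k g))%:R, (count negb (take k g))%:R).

Definition step (g : seq bool) (k : nat) : (rat * rat) * (rat * rat) :=
  (pt g k, pt g k.+1).

Definition on_seg (s : (rat * rat) * (rat * rat)) (q : rat * rat) : Prop :=
  exists t : rat, 0 <= t <= 1 /\
    q = (s.1.1 + t * (s.2.1 - s.1.1), s.1.2 + t * (s.2.2 - s.1.2)).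

Definition on_pline (m n : nat) (p q : rat * rat) : Prop :=
  exists s : rat, q = (p.1 + s * m%:R, p.2 + s * n%:R).

Definition meets (m n : nat) (p : rat * rat) (s : (rat * rat) * (rat * rat)) : Prop :=
  exists q, on_pline m n p q /\ on_seg s q.

Definition dyck (m n : nat) (g : seq bool) : Prop :=
  [/\ count id g = m, count negb g = n &
      forall k q, (k < size g)%N -> on_seg (step g k) q ->
        n%:R * q.1 <= m%:R * q.2].

Definition inO (g : seq bool) (i j : nat) : Prop :=
  [/\ (i < j)%N, (j < size g)%N, nth false g i & ~~ nth true g j].

Definition inH (m n : nat) (g : seq bool) (i j : nat) : Prop :=
  inO g i j /\ exists p, meets m n p (step g i) /\ meets m n p (step g j).

From HB Require Import structures.
From mathcomp Require Import all_boot all_order all_algebra.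
From mathcomp Require Import ring lra zify.
Set Implicit Arguments. Unset Strict Implicit. Unset Printing Implicit Defensive.
Import Order.TTheory GRing.Theory Num.Theory.
Local Open Scope ring_scope.

(* The parallel lines are the level sets of the linear form
   [level (x, y) = n x - m y], so l(p) meets a step iff [level p] lies between
   the levels of the step's endpoints; a horizontal step raises the level by
   [n] and a vertical one lowers it by [m].  With [L] the level of the end of
   [r_h] and [L'] that of the start of [r_v], so that [d = L' - L], the three
   statements become interval comparisons in [d], with closed bounds.  The
   bounds are strict because [d] avoids [-n], [m - n] and [m]: each equality
   is a relation [n x = m y] which, by coprimality and the size of the box the
   path lives in, forces [x = m], [y = n]; this is impossible for [-n] and [m],
   and for [m - n] it forces [r_h] to end at (1,0), below the diagonal. *)

Lemma count_take_mono {T : Type} (p : pred T) (s : seq T) k l :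
  (k <= l)%N -> (count p (take k s) <= count p (take l s))%N.
Proof. by move=> le_kl; rewrite -(subnKC le_kl) takeD count_cat leq_addr. Qed.

Lemma count_take_le {T : Type} (p : pred T) (s : seq T) k :
  (count p (take k s) <= count p s)%N.
Proof. by rewrite -{2}(cat_take_drop k s) count_cat leq_addr. Qed.

Lemma count_take_nth {T : Type} (x0 : T) (p : pred T) {s : seq T} {k} :
  (k < size s)%N -> count p (take k.+1 s) = (count p (take k s) + p (nth x0 s k))%N.
Proof. by move=> ks; rewrite (take_nth x0 ks) -cats1 count_cat /= addn0. Qed.

Lemma coprime_mul_eq (m n x y : nat) :
  coprime m n -> (0 < x <= m)%N -> (n * x = m * y)%N -> x = m /\ y = n.
Proof.
move=> co_mn /andP[x_gt0 le_xm] nx_my.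
have : (m %| x)%N by rewrite -(Gauss_dvdr _ co_mn) nx_my dvdn_mulr.
move=> /dvdnP[k def_x]; have k1 : k = 1%N by nia.
by subst k; split; nia.
Qed.

Lemma lt2_le2_neq (disp : Order.disp_t) (T : porderType disp) (x y z : T) :
  y != x -> y != z -> (x < y < z)%O = (x <= y <= z)%O.
Proof. by move=> yx yz; rewrite !lt_neqAle eq_sym yx yz. Qed.

Definition level (m n : nat) (p : rat * rat) : rat := n%:R * p.1 - m%:R * p.2.

Lemma on_pline_level (m n : nat) p q : (0 < m)%N ->
  on_pline m n p q <-> level m n q = level m n p.
Proof.
move=> m_gt0; have m_neq0 : (m%:R : rat) != 0 by rewrite pnatr_eq0 -lt0n.
split => [[s ->]|eq_level]; first by rewrite /level /=; ring.
case: q eq_level => x y; rewrite /level /= => eq_level.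
exists ((x - p.1) / m%:R); congr (_, _); first by field.
apply: (mulfI m_neq0); rewrite mulrDr.
have -> : m%:R * ((x - p.1) / m%:R * n%:R) = n%:R * (x - p.1) by field.
lra.
Qed.

Lemma meets_level (m n : nat) p s : (0 < m)%N ->
  meets m n p s <->
  exists t : rat, 0 <= t <= 1 /\
    level m n p = level m n s.1 + t * (level m n s.2 - level m n s.1).
Proof.
move=> m_gt0; split.
- move=> [q [/on_pline_level <- // [t [t01 ->]]]].
  by exists t; split => //; rewrite /level /=; ring.
- move=> [t [t01 eq_level]].
  set q := (s.1.1 + t * (s.2.1 - s.1.1), s.1.2 + t * (s.2.2 - s.1.2)).
  exists q; split; last by exists t.
  by apply/on_pline_level => //; rewrite eq_level /level /=; ring.
Qed.

Lemma affine_param_range (c x y : rat) : x <= y ->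
  (exists t : rat, 0 <= t <= 1 /\ c = x + t * (y - x)) <-> x <= c <= y.
Proof.
move=> le_xy; split.
- move=> [t [/andP[t_ge0 t_le1] ->]].
  have : t * (y - x) <= y - x by rewrite ler_piMl ?subr_ge0.
  have : 0 <= t * (y - x) by rewrite mulr_ge0 ?subr_ge0.
  by move=> *; apply/andP; split; lra.
- move=> /andP[le_xc le_cy]; have [eq_xy | lt_xy] := eqVneq x y.
    by exists 0; split; [rewrite lexx ler01 | subst y; lra].
  have gap_gt0 : 0 < y - x by rewrite subr_gt0 lt_neqAle lt_xy.
  exists ((c - x) / (y - x)); split; last by field; lra.
  by rewrite divr_ge0 ?subr_ge0 //= ler_pdivrMr // mul1r; lra.
Qed.

Lemma affine_param_sym (c x y : rat) :
  (exists t : rat, 0 <= t <= 1 /\ c = x + t * (y - x)) <->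
  (exists t : rat, 0 <= t <= 1 /\ c = y + t * (x - y)).
Proof.
by split=> -[t [/andP[t_ge0 t_le1] ->]]; exists (1 - t);
  (split; [apply/andP; split; lra | ring]).
Qed.

Section Path.

Variables (m n : nat) (g : seq bool) (k : nat).
Hypotheses (m_gt0 : (0 < m)%N) (k_lt : (k < size g)%N).

Lemma pt_hstep : nth false g k -> pt g k.+1 = ((pt g k).1 + 1, (pt g k).2).
Proof.
move=> hk; rewrite /pt (count_take_nth false id k_lt).
by rewrite (count_take_nth false negb k_lt) hk /= addn0 natrD.
Qed.

Lemma pt_vstep : ~~ nth true g k -> pt g k.+1 = ((pt g k).1, (pt g k).2 + 1).
Proof.
move=> vk; rewrite /pt (count_take_nth true id k_lt).
by rewrite (count_take_nth true negb k_lt) (negbTE vk) /= addn0 natrD.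
Qed.

Lemma level_hstep : nth false g k ->
  level m n (pt g k) = level m n (pt g k.+1) - n%:R.
Proof. by move=> hk; rewrite pt_hstep // /level /=; ring. Qed.

Lemma level_vstep : ~~ nth true g k ->
  level m n (pt g k.+1) = level m n (pt g k) - m%:R.
Proof. by move=> vk; rewrite pt_vstep // /level /=; ring. Qed.

Lemma meets_hstep p : nth false g k ->
  meets m n p (step g k) <->
  level m n (pt g k.+1) - n%:R <= level m n p <= level m n (pt g k.+1).
Proof.
move=> hk; rewrite meets_level // /step /= level_hstep //.
by apply: affine_param_range; rewrite gerBl.
Qed.

Lemma meets_vstep p : ~~ nth true g k ->
  meets m n p (step g k) <->
  level m n (pt g k) - m%:R <= level m n p <= level m n (pt g k).
Proof.
move=> vk; rewrite meets_level // /step /= affine_param_sym level_vstep //.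
by apply: affine_param_range; rewrite gerBl.
Qed.

Lemma dyck_pt_above : dyck m n g ->
  n%:R * (pt g k.+1).1 <= m%:R * (pt g k.+1).2.
Proof.
move=> [_ _ above]; apply: above k_lt _; exists 1.
by rewrite /step ler01 lexx; split => //=; rewrite !mul1r !subrKC.
Qed.

End Path.

Lemma gap_avoids (m n A A' B B' : nat) : coprime m n ->
  (0 < A <= A')%N -> (A' <= m)%N -> (B <= B' < n)%N ->
  let d := n%:R * (A'%:R - A%:R) - m%:R * (B'%:R - B%:R) : rat in
  [/\ d != - n%:R, d != m%:R & d = m%:R - n%:R -> A = 1%N /\ B = 0%N].
Proof.
move=> co_mn /andP[A_gt0 le_AA'] le_A'm /andP[le_BB' lt_B'n] d.
have nat_eq u v : u%:R = v%:R :> rat -> u = v by move/eqP; rewrite eqr_nat => /eqP.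
split.
- apply/eqP; rewrite /d => eq_d.
  have eq_nat : (n * A' + n + m * B = n * A + m * B')%N.
    by apply: nat_eq; rewrite !natrD !natrM; lra.
  have [] := @coprime_mul_eq m n (A' + 1 - A) (B' - B) co_mn; nia.
- apply/eqP; rewrite /d => eq_d.
  have eq_nat : (n * A' + m * B = n * A + m * B' + m)%N.
    by apply: nat_eq; rewrite !natrD !natrM; lra.
  have co_nm : coprime n m by rewrite coprime_sym.
  have [] := @coprime_mul_eq n m (B' + 1 - B) (A' - A) co_nm; nia.
- rewrite /d => eq_d.
  have eq_nat : (n * A' + n + m * B = n * A + m * B' + m)%N.
    by apply: nat_eq; rewrite !natrD !natrM; lra.
  have [] := @coprime_mul_eq m n (A' + 1 - A) (B' + 1 - B) co_mn; nia.
Qed.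

Section DyckPair.

Variables (m n : nat) (g : seq bool) (i j : nat).
Hypotheses (dyck_g : dyck m n g) (O_ij : inO g i j).

Lemma inO_count_bounds :
  let A := count id (take i.+1 g) in let A' := count id (take j g) in
  let B := count negb (take i.+1 g) in let B' := count negb (take j g) in
  [/\ (0 < A <= A')%N, (A' <= m)%N & (B <= B' < n)%N].
Proof.
have [hm hn _] := dyck_g; have [lt_ij lt_j hi vj] := O_ij.
have lt_i := ltn_trans lt_ij lt_j.
split; first (apply/andP; split).
- by rewrite (count_take_nth false id lt_i) hi addn1.
- exact: count_take_mono.
- by rewrite -hm count_take_le.
- apply/andP; split; first exact: count_take_mono.
  have := count_take_le negb g j.+1.
  by rewrite (count_take_nth true negb lt_j) vj addn1 hn.
Qed.

Lemma dyck_gap_avoids : (0 < n)%N -> coprime m n ->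
  let d := level m n (pt g j) - level m n (pt g i.+1) in
  [/\ d != - n%:R, d != m%:R - n%:R & d != m%:R].
Proof.
move=> n_gt0 co_mn d; have [A_range A'_le B_range] := inO_count_bounds.
have d_gap : d = n%:R * ((pt g j).1 - (pt g i.+1).1) - m%:R * ((pt g j).2 - (pt g i.+1).2).
  by rewrite /d /level; ring.
have [d_n d_m d_mn] := gap_avoids co_mn A_range A'_le B_range; rewrite d_gap.
split => //; apply/eqP => /d_mn[A1 B0].
have [lt_ij lt_j _ _] := O_ij.
have := dyck_pt_above (ltn_trans lt_ij lt_j) dyck_g.
by rewrite /pt /= A1 B0 mulr1 mulr0 leNgt ltr0n n_gt0.
Qed.

End DyckPair.

Theorem lemma3p8 (m n : nat) (g : seq bool) (i j : nat) :
  (0 < m)%N -> (0 < n)%N -> coprime m n -> dyck m n g -> inO g i j ->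
  let a := (pt g i.+1).1 in let b := (pt g i.+1).2 in
  let a' := (pt g j).1 in let b' := (pt g j).2 in
  let d := n%:R * (a' - a) - m%:R * (b' - b) in
  (meets m n (a - 1, b) (step g j) <-> - n%:R < d < m%:R - n%:R) /\
  (meets m n (a', b' + 1) (step g i) <-> m%:R - n%:R < d < m%:R) /\
  ~ ((- n%:R < d < m%:R - n%:R) /\ (m%:R - n%:R < d < m%:R)) /\
  (inH m n g i j <->
     meets m n (a - 1, b) (step g j) \/ meets m n (a', b' + 1) (step g i)).
Proof.
move=> m_gt0 n_gt0 co_mn dyck_g O_ij a b a' b' d.
have [lt_ij lt_j hi vj] := O_ij; have lt_i := ltn_trans lt_ij lt_j.
have meets_i p := meets_hstep n m_gt0 lt_i p hi.
have meets_j p := meets_vstep n m_gt0 lt_j p vj.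
have [] := dyck_gap_avoids dyck_g O_ij n_gt0 co_mn.
set L := level m n (pt g i.+1) in meets_i *.
set L' := level m n (pt g j) in meets_j *.
have d_gap : d = L' - L by rewrite /L /L' /level /d /a /b /a' /b'; ring.
rewrite -d_gap => d_n d_mn d_m.
have level_hend : level m n (a - 1, b) = L - n%:R by rewrite /L /level /a /b /=; ring.
have level_vstart : level m n (a', b' + 1) = L' - m%:R by rewrite /L' /level /a' /b' /=; ring.
have [m_ge0 n_ge0] : (0 : rat) <= m%:R /\ (0 : rat) <= n%:R by [].
split.
  rewrite meets_j level_hend lt2_le2_neq //.
  by split=> /andP[? ?]; apply/andP; split; lra.
split.
  rewrite meets_i level_vstart lt2_le2_neq //.
  by split=> /andP[? ?]; apply/andP; split; lra.
split; first by move=> [/andP[_ ?] /andP[? _]]; lra.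
split=> [[_ [p [/meets_i/andP[? ?] /meets_j/andP[? ?]]]] | [hend | vstart]].
- have [?|?] := lerP d (m%:R - n%:R); [left; apply/meets_j | right; apply/meets_i].
    by rewrite level_hend; apply/andP; split; lra.
  by rewrite level_vstart; apply/andP; split; lra.
- split=> //; exists (a - 1, b); split=> //.
  by rewrite meets_i level_hend; apply/andP; split; lra.
- split=> //; exists (a', b' + 1); split=> //.
  by rewrite meets_j level_vstart; apply/andP; split; lra.
Qed.
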